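(* Let $p>3$ be a prime and $f:V_n^{(p)}\to\mathbb{F}_p$ a function with $f(0)=0$. If $f(x)=f(-x)$ for all $x\in V_n^{(p)}$ and $\sum_{i\in\mathbb{F}_p^*}i^2N_i(f)=0$ in $\mathbb{F}_p$, where $N_i(f)=\#\{x\in V_n^{(p)}:f(x)=i\}$, then the linear code $\mathcal{C}_f=\{(af(x)+\langle b,x\rangle_n)_{x\in V_n^{(p)}\setminus\{0\}}:a\in\mathbb{F}_p,b\in V_n^{(p)}\}$ is self-orthogonal.
   Context: $V_n^{(p)}$ is an $n$-dimensional $\mathbb{F}_p$-vector space with a non-degenerate symmetric bilinear form $\langle\cdot,\cdot\rangle_n$. A linear code $\mathcal{C}\subseteq\mathbb{F}_p^N$ is self-orthogonal if $\mathcal{C}\subseteq\mathcal{C}^\perp$ with respect to the standard dot product. *)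

From HB Require Import structures.
From mathcomp Require Import all_boot all_order all_algebra.
Set Implicit Arguments. Unset Strict Implicit. Unset Printing Implicit Defensive.
Import GRing.Theory.
Local Open Scope ring_scope.

(* V_n^{(p)} is modelled as 'rV['F_p]_n with the bilinear form
   <x,y>_B = x B y^T for a symmetric invertible matrix B (every
   n-dim F_p-space with a non-degenerate symmetric form is isometric to one such). *)
Definition bform (p n : nat) (B : 'M['F_p]_n) (x y : 'rV['F_p]_n) : 'F_p :=
  (x *m B *m y^T) 0 0.

Definition nondeg_sym (p n : nat) (B : 'M['F_p]_n) : Prop :=
  B^T = B /\ B \in unitmx.

Definition nzvec (p n : nat) := {x : 'rV['F_p]_n | x != 0}.

Definition Ncount (p n : nat) (f : 'rV['F_p]_n -> 'F_p) (i : 'F_p) : nat :=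
  #|[set x : 'rV['F_p]_n | f x == i]|.

Definition codeword (p n : nat) (B : 'M['F_p]_n) (f : 'rV['F_p]_n -> 'F_p)
  (a : 'F_p) (b : 'rV['F_p]_n) : {ffun nzvec p n -> 'F_p} :=
  [ffun x : nzvec p n => a * f (val x) + bform B b (val x)].

Definition code_Cf (p n : nat) (B : 'M['F_p]_n) (f : 'rV['F_p]_n -> 'F_p)
  : {set {ffun nzvec p n -> 'F_p}} :=
  [set c | [exists ab : 'F_p * 'rV['F_p]_n, c == codeword B f ab.1 ab.2]].

Definition dotp (p : nat) (I : finType) (c d : {ffun I -> 'F_p}) : 'F_p :=
  \sum_(i : I) c i * d i.

Definition self_orthogonal (p : nat) (I : finType) (C : {set {ffun I -> 'F_p}}) : Prop :=
  forall c d, c \in C -> d \in C -> dotp c d = 0.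

From mathcomp Require Import all_boot all_order all_algebra zify ring.
Set Implicit Arguments. Unset Strict Implicit.
Import GRing.Theory.
Local Open Scope ring_scope.

(* Expanding the inner product of two codewords of C_f gives
   a a' sum f^2 + a sum f <b',.> + a' sum f <b,.> + sum <b,.><b',.>,
   summed over all of V since every term vanishes at 0.  The first sum is
   sum_i i^2 N_i(f) = 0 by hypothesis.  The others vanish because a sum over
   V is unchanged by a linear substitution x |-> c x: with c = -1 the summand
   f <b,.> changes sign (f is even), and with c = 2 the quadratic summand is
   multiplied by 4, so 2 and 3 being units of F_p forces both sums to 0. *)

Lemma sum_eq0_scale (F : fieldType) (V : finLmodType F) (g : V -> F) (c e : F) :
  c != 0 -> e != 1 -> (forall x, g (c *: x) = e * g x) -> \sum_x g x = 0.
Proof.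
move=> c_neq0 e_neq1 gZ.
have : \sum_x g x = e * \sum_x g x.
  by rewrite {1}(reindex_inj (scalerI c_neq0)) mulr_sumr; apply: eq_bigr.
move/eqP; rewrite -subr_eq0 -{1}[\sum_x g x]mul1r -mulrBl mulf_eq0.
by rewrite subr_eq0 eq_sym (negbTE e_neq1) => /eqP.
Qed.

Lemma Fp_natr_neq0 (p m : nat) : prime p -> (0 < m < p)%N -> (m%:R : 'F_p) != 0.
Proof.
move=> p_pr /andP[m_gt0 m_lt_p]; rewrite -(dvdn_pcharf (pchar_Fp p_pr)).
by apply/negP => /(dvdn_leq m_gt0); rewrite leqNgt m_lt_p.
Qed.

Section LinearForms.

Variables (p n : nat) (B : 'M['F_p]_n).
Hypotheses (p_pr : prime p) (p_gt3 : (3 < p)%N).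

Lemma bformZr b c x : bform B b (c *: x) = c * bform B b x.
Proof. by rewrite /bform linearZ /= -scalemxAr mxE. Qed.

Lemma bform0r b : bform B b 0 = 0.
Proof. by rewrite -[0](scale0r 0) bformZr mul0r. Qed.

Lemma sum_even_mul_bform (f : 'rV['F_p]_n -> 'F_p) b :
  (forall x, f x = f (- x)) -> \sum_x f x * bform B b x = 0.
Proof.
move=> f_even; apply: (@sum_eq0_scale _ _ _ (-1) (-1)).
- by rewrite oppr_eq0 oner_eq0.
- rewrite -subr_eq0 -opprD oppr_eq0.
  by apply: (@Fp_natr_neq0 p 2) => //; lia.
- by move=> x; rewrite scaleN1r -f_even -scaleN1r bformZr; ring.
Qed.

Lemma sum_bform_mul_bform b b' : \sum_x bform B b x * bform B b' x = 0.
Proof.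
apply: (@sum_eq0_scale _ _ _ 2%:R 4%:R).
- by apply: Fp_natr_neq0 => //; lia.
- rewrite -subr_eq0 (_ : 4%:R - 1 = 3%:R :> 'F_p); last by ring.
  by apply: Fp_natr_neq0 => //; lia.
- by move=> x; rewrite !bformZr; ring.
Qed.

End LinearForms.

Lemma sum_comp_Ncount (p n : nat) (R : nmodType) (f : 'rV['F_p]_n -> 'F_p)
    (h : 'F_p -> R) :
  h 0 = 0 -> \sum_x h (f x) = \sum_(i : 'F_p | i != 0) h i *+ Ncount f i.
Proof.
move=> h0; rewrite (partition_big f predT) //= (bigD1 0) //=.
rewrite big1 ?add0r => [|x /eqP ->//]; apply: eq_bigr => i _.
rewrite (eq_bigr (fun=> h i)) => [|x /eqP ->//].
by rewrite sumr_const /Ncount cardsE.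
Qed.

Lemma sum_nzvec (p n : nat) (R : nmodType) (G : 'rV['F_p]_n -> R) :
  G 0 = 0 -> \sum_(x : nzvec p n) G (val x) = \sum_x G x.
Proof.
by move=> G0; rewrite [RHS](bigD1 0) //= G0 add0r (big_sub (fun x => x != 0)).
Qed.

Theorem lemma13 (p n : nat) (B : 'M['F_p]_n) (f : 'rV['F_p]_n -> 'F_p) :
  prime p -> (3 < p)%N -> nondeg_sym B ->
  f 0 = 0 ->
  (forall x, f x = f (- x)) ->
  \sum_(i : 'F_p | i != 0) i ^+ 2 * (Ncount f i)%:R = 0 ->
  self_orthogonal (code_Cf B f).
Proof.
move=> p_pr p_gt3 _ f0 f_even sumN c d.
rewrite !inE => /existsP[[a b] /eqP ->] /existsP[[a' b'] /eqP ->] /=.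
pose G x := a * a' * f x ^+ 2 + a * (f x * bform B b' x)
  + a' * (f x * bform B b x) + bform B b x * bform B b' x.
rewrite /dotp (eq_bigr (fun x : nzvec p n => G (val x))) => [|x _]; last first.
  by rewrite !ffunE /G; ring.
rewrite sum_nzvec; last by rewrite /G f0 !bform0r; ring.
have sum_f2 : \sum_x f x ^+ 2 = 0.
  by rewrite (sum_comp_Ncount f (h := fun i => i ^+ 2)) ?expr0n // -[RHS]sumN;
    apply: eq_bigr => i _; rewrite mulr_natr.
rewrite !big_split /= -!mulr_sumr sum_f2 sum_bform_mul_bform //.
by rewrite !sum_even_mul_bform //; ring.
Qed.
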